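(* For $n\ge 3$, let $P'_n$ be the graph on vertices $v_1,\dots,v_{n+1}$ whose edges are $\{v_i,v_{i+1}\}$ for $1\le i\le n-1$ together with $\{v_{n-1},v_{n+1}\}$ (a path on $n$ vertices with a pendant vertex attached to its second-to-last vertex). Then: (a) if $n\ge 3$ and $n\equiv 0 \pmod 3$, then $\mathrm{mur}(P'_n)=n-2$; (b) if $n\ge 6$ and $n+1=4k$ for some integer $k$, then $\mathrm{mur}(P'_n)=n-2$.
   Context: For a finite simple undirected graph $G$ on vertices $v_1,\dots,v_n$, let $A_G$ be its $(0,1)$-adjacency matrix, $D_G=\mathrm{diag}(d_1,\dots,d_n)$ with $d_i$ the degree of $v_i$, $I$ the $n\times n$ identity matrix and $J$ the $n\times n$ all-ones matrix. A universal adjacency matrix of $G$ is any matrix $\alpha A_G+\beta I+\gamma J+\delta D_G$ with real scalars $\alpha,\beta,\gamma,\delta$ and $\alpha\neq 0$. The minimum universal rank $\mathrm{mur}(G)$ is the minimum rank over all universal adjacency matrices of $G$. *)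

From HB Require Import structures.
From mathcomp Require Import all_boot all_order all_algebra.
From mathcomp Require Import reals.
Set Implicit Arguments. Unset Strict Implicit. Unset Printing Implicit Defensive.
Import Order.TTheory GRing.Theory Num.Theory.
Local Open Scope ring_scope.

Definition simple_graph (m : nat) (e : rel 'I_m) : Prop :=
  (forall i j, e i j = e j i) /\ (forall i, ~~ e i i).

Section Universal.
Variables (R : realType) (m : nat) (e : rel 'I_m).

Definition adj_mx : 'M[R]_m := \matrix_(i, j) (e i j)%:R.
Definition deg_mx : 'M[R]_m := diag_mx (\row_i (#|[pred j | e i j]|)%:R).
Definition J_mx : 'M[R]_m := const_mx 1.

Definition univ_adj_mx (a b c d : R) : 'M[R]_m :=
  a *: adj_mx + b *: 1%:M + c *: J_mx + d *: deg_mx.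

Definition is_mur (r : nat) : Prop :=
  (exists a b c d : R, a != 0 /\ \rank (univ_adj_mx a b c d) = r) /\
  (forall a b c d : R, a != 0 -> (r <= \rank (univ_adj_mx a b c d))%N).
End Universal.

(* P'_n on vertices v_1..v_{n+1}, encoded as 'I_(n+1) with v_k <-> k-1.
   Edges v_i v_{i+1} (1 <= i <= n-1) and v_{n-1} v_{n+1}. *)
Definition Pprime_rel (n : nat) : rel 'I_(n.+1) :=
  fun i j =>
    [|| ((i.+1 == j) && (j <= n.-1)%N),
        ((j.+1 == i) && (i <= n.-1)%N),
        ((i == (n - 2)%N :> nat) && (j == n :> nat)) |
        ((j == (n - 2)%N :> nat) && (i == n :> nat))].

(* Lower bound: removing the rank-one part gamma J from a universal adjacency
   matrix leaves alpha A + beta I + delta D, whose rows v_1, ..., v_{n-1}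
   restricted to the columns v_2, ..., v_n form a triangular matrix with
   diagonal alpha, so the rank is at least n - 2.
   Upper bound: three independent vectors annihilate a suitable universal
   adjacency matrix.  The leaves v_n and v_{n+1} are twins, so e_n - e_{n+1}
   does whenever beta + delta = 0.  The other two are periodic along the path
   v_1 ... v_{n-1}: for 4 | n + 1 the matrix ((n+1)/2) A - J and the
   4-periodic vectors (1,0,-1,0,...) and (0,1,1,0,...), which A sends to 0
   and to the all-ones vector; for 3 | n the matrix (n/3 - 1)(A + D - I) - J
   and the 3-periodic vectors (1,0,-1,...) and (0,1,0,...), which A + D - I
   sends to 0 and to the all-ones vector once their values at the leaves are
   adjusted. *)

From HB Require Import structures.
From mathcomp Require Import all_boot all_order all_algebra.
From mathcomp Require Import reals.
From mathcomp Require Import ring zify.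
Set Implicit Arguments. Unset Strict Implicit. Unset Printing Implicit Defensive.
Import Order.TTheory GRing.Theory Num.Theory.
Local Open Scope ring_scope.

Lemma big_ord_mem (R : Type) (idx : R) (op : Monoid.com_law idx) N (s : seq nat)
    (F : nat -> R) :
  uniq s -> all (fun k => k < N)%N s ->
  \big[op/idx]_(k < N | (k : nat) \in s) F k = \big[op/idx]_(x <- s) F x.
Proof.
move=> s_uniq s_lt; rewrite -(big_mkord (fun k => k \in s) F) -big_filter.
apply: perm_big; apply: uniq_perm => [||k]; [exact/filter_uniq/iota_uniq | exact: s_uniq |].
rewrite mem_filter mem_index_iota /= andbC.
by apply/andP/idP => [[]|ks] //; split => //; apply: (allP s_lt).
Qed.

Lemma sum_mod_periodic (V : nmodType) (g : nat -> V) m q r : (r <= m)%N ->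
  \sum_(k < m * q + r) g (k %% m)%N = (\sum_(i < m) g i) *+ q + \sum_(i < r) g i.
Proof.
move=> r_le; elim: q => [|q IHq].
  rewrite muln0 add0n mulr0n add0r; apply: eq_bigr => k _.
  by rewrite modn_small // (leq_trans _ r_le).
rewrite mulnS -addnA big_split_ord /=.
have modE (k : 'I_m) : g (k %% m)%N = g k by rewrite modn_small.
have shiftE (k : 'I_(m * q + r)) : g ((m + k) %% m)%N = g (k %% m)%N by rewrite modnDl.
by rewrite (eq_bigr _ (fun k _ => modE k)) (eq_bigr _ (fun k _ => shiftE k)) IHq mulrS addrA.
Qed.

Section Rank.
Variable K : fieldType.

Definition in_left_kernel N (M : 'M[K]_N) (v : nat -> K) : Prop :=
  forall j : 'I_N, \sum_(k < N) v k * M k j = 0.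

Lemma mxrank_mxsub m n m' n' (f : 'I_m' -> 'I_m) (g : 'I_n' -> 'I_n) (A : 'M[K]_(m, n)) :
  (\rank (mxsub f g A) <= \rank A)%N.
Proof.
rewrite -[A in mxsub _ _ A]mulmx1 mxsub_mul.
by rewrite (leq_trans (mxrankM_maxl _ _)) ?mxrankS ?rowsub_sub.
Qed.

Lemma mxrank_unit_mxsub m n k (f g : 'I_k -> _) (A : 'M[K]_(m, n)) :
  mxsub f g A \in unitmx -> (k <= \rank A)%N.
Proof. by move/mxrank_unit <-; apply: mxrank_mxsub. Qed.

Lemma trig_mx_unit n (A : 'M[K]_n) : is_trig_mx A -> (forall i, A i i != 0) -> A \in unitmx.
Proof.
move=> trigA nzA; rewrite unitmxE unitfE det_trig //.
by rewrite prodf_seq_neq0; apply/allP => i _; apply: nzA.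
Qed.

Lemma mxrank_addr_le m n (A B : 'M[K]_(m, n)) : (\rank A <= \rank (A + B)%R + \rank B)%N.
Proof. by have := mxrank_add (A + B) (- B); rewrite addrK mxrank_opp. Qed.

Lemma mxrank_scale_const1 m n (c : K) :
  (\rank (c *: (const_mx 1%R : 'M[K]_(m, n))) <= 1)%N.
Proof.
have -> : c *: (const_mx 1%R : 'M[K]_(m, n)) = const_mx c *m (const_mx 1%R : 'M_(1, n)).
  by apply/matrixP => i j; rewrite !mxE big_ord1 !mxE mulr1.
exact: leq_trans (mxrankM_maxr _ _) (rank_leq_row _).
Qed.

Lemma mxrank_add_const_ge m n (A : 'M[K]_(m, n)) (c : K) :
  (\rank A <= \rank (A + c *: const_mx 1%R)%R + 1)%N.
Proof.
by rewrite (leq_trans (mxrank_addr_le _ (c *: const_mx 1%R))) ?leq_add2l ?mxrank_scale_const1.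
Qed.

Lemma mxrank_add_le_mul0 m n p (V : 'M[K]_(m, n)) (M : 'M[K]_(n, p)) :
  V *m M = 0 -> (\rank V + \rank M <= n)%N.
Proof.
move=> /sub_kermxP /mxrankS; rewrite mxrank_ker.
by have := rank_leq_row M; lia.
Qed.

Lemma mxrank_le_left_kernel3 N (M : 'M[K]_N) (v1 v2 v3 : nat -> K) (i1 i2 i3 : 'I_N) :
  in_left_kernel M v1 -> in_left_kernel M v2 -> in_left_kernel M v3 ->
  v1 i1 != 0 -> v2 i2 != 0 -> v3 i3 != 0 -> v1 i2 = 0 -> v1 i3 = 0 -> v2 i3 = 0 ->
  (\rank M <= N - 3)%N.
Proof.
move=> ker1 ker2 ker3 nz1 nz2 nz3 z12 z13 z23.
pose V : 'M[K]_(3, N) := \matrix_(i < 3, k < N) [:: v1 k; v2 k; v3 k]`_i.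
have VM0 : V *m M = 0.
  apply/matrixP => i j; rewrite !mxE; under eq_bigr do rewrite mxE.
  by case: i => [[|[|[|i]]] //= _].
pose pos : 'I_3 -> 'I_N := fun j => nth i1 [:: i1; i2; i3] j.
have : colsub pos V \in unitmx.
  apply: trig_mx_unit => [|i]; rewrite ?mxE.
    apply/is_trig_mxP => i j; rewrite !mxE.
    by case: i j => [[|[|[|i]]] //= _] [[|[|[|j]]] //= _].
  by case: i => [[|[|[|i]]] //= _].
by move/mxrank_unit_mxsub; have := mxrank_add_le_mul0 VM0; lia.
Qed.

End Rank.

Lemma sum_mul_univ_adj (R : realType) N (e : rel 'I_N) (a b c d : R) (v : nat -> R)
    (j : 'I_N) :
  \sum_(k < N) v k * univ_adj_mx e a b c d k j =
  a * \sum_(k < N) (e k j)%:R * v k + (b + d * #|[pred k | e j k]|%:R) * v j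
  + c * \sum_(k < N) v k.
Proof.
have diagE (y : R) (x : 'I_N -> R) :
    \sum_(k < N) v k * (y * (x k *+ (k == j))) = y * x j * v j.
  rewrite (bigD1 j) //= eqxx mulr1n big1 => [|k /negbTE ->]; last by rewrite mulr0n !mulr0.
  by rewrite addr0 mulrC.
have adjE : \sum_(k < N) v k * (a * (e k j)%:R) = a * \sum_(k < N) (e k j)%:R * v k.
  by rewrite mulr_sumr; apply: eq_bigr => k _; rewrite mulrCA [v k * _]mulrC.
have constE : \sum_(k < N) v k * (c * 1) = c * \sum_(k < N) v k.
  by rewrite mulr_sumr; apply: eq_bigr => k _; rewrite mulr1 mulrC.
under eq_bigr => k _ do rewrite !mxE !mulrDr.
rewrite !big_split /= adjE constE (diagE b (fun => 1)) diagE; ring.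
Qed.

Ltac nat_case_bash :=
  rewrite -?subn1;
  repeat (rewrite /= ?inE; first [case: eqP => ? | case: leqP => ?]);
  by [] || lia.

Section PprimeGraph.
Variable n : nat.
Hypothesis n_ge3 : (3 <= n)%N.

Definition Pprime_nbrs (j : nat) : seq nat :=
  if j == 0%N then [:: 1%N] else if (j.+2 < n)%N then [:: j.-1; j.+1]
  else if j.+2 == n then [:: (n - 3)%N; n.-1; n] else [:: (n - 2)%N].

Lemma Pprime_rel_sym (k j : 'I_n.+1) : Pprime_rel k j = Pprime_rel j k.
Proof. rewrite /Pprime_rel; nat_case_bash. Qed.

Lemma Pprime_relE (k j : 'I_n.+1) : Pprime_rel k j = ((k : nat) \in Pprime_nbrs j).
Proof.
have := ltn_ord k; have := ltn_ord j; rewrite /Pprime_rel /Pprime_nbrs.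
move: (nat_of_ord k) (nat_of_ord j) => x y ? ?; nat_case_bash.
Qed.

Lemma Pprime_nbrs_uniq j : (j <= n)%N -> uniq (Pprime_nbrs j).
Proof. rewrite /Pprime_nbrs => ?; nat_case_bash. Qed.

Lemma Pprime_nbrs_lt j : (j <= n)%N -> all (fun k => k < n.+1)%N (Pprime_nbrs j).
Proof. rewrite /Pprime_nbrs => ?; nat_case_bash. Qed.

Lemma Pprime_rel_subdiag (i j : 'I_n.+1) :
  (i < j)%N -> (j < n)%N -> Pprime_rel i j = (i.+1 == j :> nat).
Proof.
rewrite /Pprime_rel; move: (nat_of_ord i) (nat_of_ord j) => x y ? ?; nat_case_bash.
Qed.

Lemma Pprime_adj_sum (R : pzSemiRingType) (v : nat -> R) (j : 'I_n.+1) :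
  \sum_(k < n.+1) (Pprime_rel k j)%:R * v k = \sum_(x <- Pprime_nbrs j) v x.
Proof.
have j_le : (j <= n)%N by rewrite -ltnS.
rewrite -(@big_ord_mem _ _ _ n.+1) ?Pprime_nbrs_uniq ?Pprime_nbrs_lt // [RHS]big_mkcond /=.
by apply: eq_bigr => k _; rewrite Pprime_relE; case: (_ \in _); rewrite ?mul1r ?mul0r.
Qed.

Lemma Pprime_degree (j : 'I_n.+1) : #|[pred k | Pprime_rel j k]| = size (Pprime_nbrs j).
Proof.
have j_le : (j <= n)%N by rewrite -ltnS.
rewrite -sum1_card -sum1_size -(@big_ord_mem _ _ _ n.+1) ?Pprime_nbrs_uniq ?Pprime_nbrs_lt //.
by apply: eq_bigl => k; rewrite inE Pprime_rel_sym Pprime_relE.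
Qed.

End PprimeGraph.

Section PprimeUniversal.
Variables (R : realType) (n : nat).
Hypothesis n_ge3 : (3 <= n)%N.

Local Notation U := (univ_adj_mx (@Pprime_rel n)).

Lemma Pprime_rank_univ_adj_ge (a b c d : R) : a != 0 -> (n - 2 <= \rank (U a b c d))%N.
Proof.
move=> a_nz.
pose M0 := a *: adj_mx R (@Pprime_rel n) + b *: 1%:M + d *: deg_mx R (@Pprime_rel n).
have U_eq : U a b c d = M0 + c *: J_mx R n.+1 by rewrite /univ_adj_mx /M0 addrAC.
pose T := mxsub (fun i : 'I_n.-1 => inord i) (fun j : 'I_n.-1 => inord j.+1) M0.
have T_entry (i j : 'I_n.-1) : (i <= j)%N -> T i j = a * (i == j :> nat)%:R.
  move=> le_ij; have := ltn_ord i; have := ltn_ord j => lt_j lt_i.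
  have [lt_i1 lt_j1] : (i < n.+1)%N /\ (j.+1 < n.+1)%N by split; lia.
  have neq_ij : (inord i == inord j.+1 :> 'I_n.+1) = false.
    by apply/eqP => /(congr1 val); rewrite /= !inordK //; lia.
  rewrite !mxE neq_ij mulr0 mulr0n mulr0 !addr0 Pprime_rel_subdiag; rewrite ?inordK //; lia.
have T_unit : T \in unitmx.
  apply: trig_mx_unit => [|i]; last by rewrite T_entry // eqxx mulr1.
  by apply/is_trig_mxP => i j lt_ij; rewrite T_entry ?(ltnW lt_ij) // ltn_eqF // mulr0.
have := leq_trans (mxrank_unit_mxsub T_unit) (mxrank_add_const_ge M0 c).
by rewrite -U_eq; lia.
Qed.

Lemma Pprime_univ_kernel (a b c d l : R) (v : nat -> R) :
  a * v 1%N + (b + d) * v 0%N = l ->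
  (forall i, (i + 4 <= n)%N -> a * (v i + v i.+2) + (b + d *+ 2) * v i.+1 = l) ->
  a * (v (n - 3)%N + v n.-1 + v n) + (b + d *+ 3) * v (n - 2)%N = l ->
  a * v (n - 2)%N + (b + d) * v n.-1 = l ->
  a * v (n - 2)%N + (b + d) * v n = l ->
  l + c * \sum_(k < n.+1) v k = 0 ->
  in_left_kernel (U a b c d) v.
Proof.
move=> eq_first eq_inner eq_hub eq_leaf1 eq_leaf2 eq_sum j.
rewrite sum_mul_univ_adj Pprime_adj_sum // (Pprime_degree n_ge3) -[RHS]eq_sum.
congr (_ + _); case: j => -[_|i i_lt] /=.
  by rewrite big_seq1 mulr_natr mulr1n.
rewrite /Pprime_nbrs /=; case: ltnP => [i_inner|i_outer].
  rewrite !big_cons big_nil addr0 mulr_natr -(eq_inner i) //; lia.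
case: eqP => [i_hub|i_leaf].
  have -> : i.+1 = (n - 2)%N by lia.
  by rewrite !big_cons big_nil addr0 mulr_natr -eq_hub !addrA.
have [->|->] : i.+1 = n.-1 \/ i.+1 = n by lia.
  by rewrite big_seq1 mulr_natr mulr1n.
by rewrite big_seq1 mulr_natr mulr1n.
Qed.

(* The path v_1, ..., v_{n-1} is indexed by 0, ..., n - 2 and the leaves v_n,
   v_{n+1} by n - 1 and n. *)
Definition path_periodic (m : nat) (g : nat -> R) (u w : R) (k : nat) : R :=
  if (k < n.-1)%N then g (k %% m)%N else if k == n.-1 then u else w.

Lemma path_periodic_path m g u w k : (k < n.-1)%N -> path_periodic m g u w k = g (k %% m)%N.
Proof. by rewrite /path_periodic => ->. Qed.

Lemma path_periodic_pred m g u w : path_periodic m g u w n.-1 = u.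
Proof. by rewrite /path_periodic ltnn eqxx. Qed.

Lemma path_periodic_last m g u w : path_periodic m g u w n = w.
Proof. by rewrite /path_periodic ifF ?ifF //; apply/negbTE; lia. Qed.

Lemma sum_path_periodic m q g u w : (2 <= m)%N -> n = (m * q + 3)%N ->
  \sum_(k < n.+1) path_periodic m g u w k
    = (\sum_(r < m) g r) *+ q + (g 0%N + g 1%N) + u + w.
Proof.
move=> m_ge2 n_eq; have n_gt0 : (0 < n)%N by lia.
rewrite big_ord_recr /= path_periodic_last -(prednK n_gt0) big_ord_recr /=.
rewrite path_periodic_pred.
under eq_bigr => k _ do rewrite (path_periodic_path _ _ _ _ (ltn_ord k)).
have -> : n.-1 = (m * q + 2)%N by lia.
by rewrite sum_mod_periodic // !big_ord_recr big_ord0 /= add0r.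
Qed.

Lemma path_periodic_kernel m q (g : nat -> R) (u w a b c d l : R) :
  (2 <= m)%N -> n = (m * q + 3)%N ->
  a * g 1%N + (b + d) * g 0%N = l ->
  (forall r, (r < m)%N ->
     a * (g r + g ((r + 2) %% m)%N) + (b + d *+ 2) * g ((r + 1) %% m)%N = l) ->
  a * (g 0%N + u + w) + (b + d *+ 3) * g 1%N = l ->
  a * g 1%N + (b + d) * u = l ->
  a * g 1%N + (b + d) * w = l ->
  l + c * ((\sum_(r < m) g r) *+ q + (g 0%N + g 1%N) + u + w) = 0 ->
  in_left_kernel (U a b c d) (path_periodic m g u w).
Proof.
move=> m_ge2 n_eq eq_first eq_inner eq_hub eq_leaf1 eq_leaf2 eq_sum.
have mod_n3 : ((n - 3) %% m = 0)%N by rewrite n_eq addnK modnMr.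
have mod_n2 : ((n - 2) %% m = 1)%N.
  by rewrite (_ : n - 2 = q * m + 1)%N ?modnMDl ?modn_small //; lia.
have [lt_0 lt_1 lt_n3 lt_n2] : [/\ 0 < n.-1, 1 < n.-1, n - 3 < n.-1 & n - 2 < n.-1]%N.
  by split; lia.
apply: (@Pprime_univ_kernel a b c d l) => //.
- by rewrite !path_periodic_path // mod0n modn_small.
- move=> i i_le; rewrite !path_periodic_path; try lia.
  rewrite -[i.+2]addn2 -[i.+1]addn1 -(modnDml i 1) -(modnDml i 2).
  by apply: eq_inner; rewrite ltn_mod; lia.
- by rewrite !(path_periodic_path _ _ _ _ lt_n3, path_periodic_path _ _ _ _ lt_n2)
    mod_n3 mod_n2 path_periodic_pred path_periodic_last.
- by rewrite (path_periodic_path _ _ _ _ lt_n2) mod_n2 path_periodic_pred.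
- by rewrite (path_periodic_path _ _ _ _ lt_n2) mod_n2 path_periodic_last.
- by rewrite (@sum_path_periodic m q).
Qed.

Lemma twin_leaves_kernel m q (a b c d : R) :
  (2 <= m)%N -> n = (m * q + 3)%N -> b + d = 0 ->
  in_left_kernel (U a b c d) (path_periodic m (fun=> 0) 1 (-1)).
Proof.
move=> m_ge2 n_eq bd0; apply: (@path_periodic_kernel m q _ _ _ a b c d 0 m_ge2 n_eq).
- by rewrite bd0; ring.
- by move=> r _; ring.
- ring.
- by rewrite bd0; ring.
- by rewrite bd0; ring.
- by rewrite big1 // mul0rn; ring.
Qed.

Lemma Pprime_rank_le_periodic m q (g1 g2 : nat -> R) (u1 u2 a b c d : R) :
  (2 <= m)%N -> n = (m * q + 3)%N -> b + d = 0 ->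
  in_left_kernel (U a b c d) (path_periodic m g1 u1 0) ->
  in_left_kernel (U a b c d) (path_periodic m g2 u2 0) ->
  g1 0%N != 0 -> g1 1%N = 0 -> g2 1%N != 0 ->
  (\rank (U a b c d) <= n - 2)%N.
Proof.
move=> m_ge2 n_eq bd0 ker1 ker2 g10 g11 g21.
have [lt_0 lt_1 lt_1n] : [/\ 0 < n.-1, 1 < n.-1 & 1 < n.+1]%N by split; lia.
have -> : (n - 2 = n.+1 - 3)%N by lia.
apply: (@mxrank_le_left_kernel3 _ _ _ _ _ _ ord0 (inord 1) ord_max ker1 ker2
          (twin_leaves_kernel a c m_ge2 n_eq bd0)); rewrite /= ?inordK //.
- by rewrite path_periodic_path // mod0n.
- by rewrite path_periodic_path // modn_small.
- by rewrite path_periodic_last oppr_eq0 oner_neq0.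
- by rewrite path_periodic_path // modn_small.
- by rewrite path_periodic_last.
- by rewrite path_periodic_last.
Qed.

Lemma Pprime_low_rank_mod4 q : n = (4 * q + 3)%N ->
  exists a b c d : R, a != 0 /\ (\rank (U a b c d) <= n - 2)%N.
Proof.
move=> n_eq; pose a : R := (2 * q.+1)%:R.
pose g1 r : R := [:: 1; 0; -1; 0]`_r.
pose g2 r : R := [:: 0; 1; 1; 0]`_r.
exists a, 0, (-1), 0; split; first by rewrite pnatr_eq0.
apply: (@Pprime_rank_le_periodic 4 q g1 g2 (-1) 1) => //; first by rewrite addr0.
- apply: (@path_periodic_kernel 4 q g1 (-1) 0 a 0 (-1) 0 0 isT n_eq); rewrite /g1 /=.
  + ring.
  + by move=> [|[|[|[|r]]]] //= _; ring.
  + ring.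
  + ring.
  + ring.
  + by rewrite !big_ord_recr big_ord0 /=; ring.
- apply: (@path_periodic_kernel 4 q g2 1 0 a 0 (-1) 0 a isT n_eq); rewrite /g2 /=.
  + ring.
  + by move=> [|[|[|[|r]]]] //= _; ring.
  + ring.
  + ring.
  + ring.
  + by rewrite !big_ord_recr big_ord0 /= /a; ring.
- by rewrite /g1 /= oner_neq0.
- by rewrite /g2 /= oner_neq0.
Qed.

Lemma Pprime_low_rank_mod3 q : (0 < q)%N -> n = (3 * q + 3)%N ->
  exists a b c d : R, a != 0 /\ (\rank (U a b c d) <= n - 2)%N.
Proof.
move=> q_gt0 n_eq; pose a : R := q%:R.
pose g1 r : R := [:: 1; 0; -1]`_r.
pose g2 r : R := [:: 0; 1; 0]`_r.
exists a, (- a), (-1), a; split; first by rewrite pnatr_eq0 -lt0n.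
apply: (@Pprime_rank_le_periodic 3 q g1 g2 (-1) (-1)) => //; first by rewrite addNr.
- apply: (@path_periodic_kernel 3 q g1 (-1) 0 a (- a) (-1) a 0 isT n_eq); rewrite /g1 /=.
  + ring.
  + by move=> [|[|[|r]]] //= _; ring.
  + ring.
  + ring.
  + ring.
  + by rewrite !big_ord_recr big_ord0 /=; ring.
- apply: (@path_periodic_kernel 3 q g2 (-1) 0 a (- a) (-1) a a isT n_eq); rewrite /g2 /=.
  + ring.
  + by move=> [|[|[|r]]] //= _; ring.
  + ring.
  + ring.
  + ring.
  + by rewrite !big_ord_recr big_ord0 /= /a; ring.
- by rewrite /g1 /= oner_neq0.
- by rewrite /g2 /= oner_neq0.
Qed.

Lemma Pprime_is_mur :
  (exists a b c d : R, a != 0 /\ (\rank (U a b c d) <= n - 2)%N) ->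
  is_mur R (@Pprime_rel n) (n - 2).
Proof.
move=> [a [b [c [d [a_nz rank_le]]]]]; split => [|a' b' c' d' /Pprime_rank_univ_adj_ge //].
by exists a, b, c, d; split => //; apply/eqP; rewrite eqn_leq rank_le Pprime_rank_univ_adj_ge.
Qed.

End PprimeUniversal.

Local Close Scope ring_scope.

Theorem proposition27 (R : realType) (n : nat) :
  (3 <= n)%N ->
  ((n %% 3 == 0)%N -> is_mur R (@Pprime_rel n) (n - 2)) /\
  ((6 <= n)%N -> (exists k : nat, n.+1 = 4 * k)%N -> is_mur R (@Pprime_rel n) (n - 2)).
Proof.
move=> n_ge3; split => [/eqP n_mod3 | _ [k n1_eq]]; apply: Pprime_is_mur => //.
- have [n_eq3|n_ne3] := eqVneq n 3.
    by apply: (@Pprime_low_rank_mod4 R n n_ge3 0); lia.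
  by apply: (@Pprime_low_rank_mod3 R n n_ge3 (n %/ 3).-1); lia.
- by apply: (@Pprime_low_rank_mod4 R n n_ge3 k.-1); lia.
Qed.
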